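(* Let $\mathbb{K}$ be a field of characteristic zero, let $p,q\in\mathbb{Z}^n_{\ge0}$ be nonzero vectors and let $\beta,\gamma\in\mathbb{K}^n$ be non-proportional vectors such that the derivations $\Delta^p_\beta$ and $\Delta^q_\gamma$ of $\mathbb{K}[x_1,\ldots,x_n]$ generate a finite dimensional Lie algebra. Let $r$ and $s$ be the smallest non-negative integers such that $\langle\beta,rp+q\rangle=0$ and $\langle\gamma,p+sq\rangle=0$. Then $r=0$ or $s=0$.
   Context: For $p\in\mathbb{Z}^n_{\ge0}$ and $\beta\in\mathbb{K}^n$, $\Delta^p_\beta:=x_1^{p_1}\cdots x_n^{p_n}\sum_{j=1}^n\beta_jx_j\partial_j$, where $\partial_j=\partial/\partial x_j$. $\langle\beta,u\rangle:=\sum_i\beta_iu_i$. The Lie bracket is the commutator of derivations. *)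

From HB Require Import structures.
From mathcomp Require Import all_boot all_order all_algebra.
From mathcomp Require Import mpoly.
Set Implicit Arguments. Unset Strict Implicit. Unset Printing Implicit Defensive.
Import GRing.Theory.
Local Open Scope ring_scope.

Definition pairing (K : fieldType) (n : nat) (beta : 'I_n -> K) (u : 'X_{1..n}) : K :=
  \sum_(i < n) beta i * (u i)%:R.

Definition Delta (K : fieldType) (n : nat) (p : 'X_{1..n}) (beta : 'I_n -> K)
    (f : {mpoly K[n]}) : {mpoly K[n]} :=
  'X_[p] * \sum_(j < n) (beta j *: ('X_j * mderiv j f)).

Definition lie_bracket (K : fieldType) (n : nat) (D E : {mpoly K[n]} -> {mpoly K[n]})
    (f : {mpoly K[n]}) : {mpoly K[n]} :=
  D (E f) - E (D f).

Inductive lie_word : Type :=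
| LGen1 : lie_word
| LGen2 : lie_word
| LBr : lie_word -> lie_word -> lie_word.

Fixpoint eval_word (K : fieldType) (n : nat) (D1 D2 : {mpoly K[n]} -> {mpoly K[n]})
    (w : lie_word) : {mpoly K[n]} -> {mpoly K[n]} :=
  match w with
  | LGen1 => D1
  | LGen2 => D2
  | LBr w1 w2 => lie_bracket (eval_word D1 D2 w1) (eval_word D1 D2 w2)
  end.

(* The Lie algebra generated by D1, D2 is the K-span of all iterated brackets;
   it is finite dimensional iff this span lies in the span of finitely many maps. *)
Definition gen_lie_findim (K : fieldType) (n : nat)
    (D1 D2 : {mpoly K[n]} -> {mpoly K[n]}) : Prop :=
  exists (k : nat) (B : 'I_k -> ({mpoly K[n]} -> {mpoly K[n]})),
    forall w : lie_word, exists c : 'I_k -> K,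
      forall f, eval_word D1 D2 w f = \sum_(i < k) c i *: B i f.

Definition proportional (K : fieldType) (n : nat) (beta gamma : 'I_n -> K) : Prop :=
  (exists c : K, forall i, beta i = c * gamma i) \/
  (exists c : K, forall i, gamma i = c * beta i).

Definition mnm_scale (n : nat) (k : nat) (m : 'X_{1..n}) : 'X_{1..n} :=
  [multinom (k * m i)%N | i < n].

From HB Require Import structures.
From mathcomp Require Import all_boot all_order all_algebra.
From mathcomp Require Import mpoly.
From mathcomp Require Import ring.
Set Implicit Arguments. Unset Strict Implicit. Unset Printing Implicit Defensive.
Import GRing.Theory.
Local Open Scope ring_scope.

(* Write a = <beta,p>, b = <beta,q>, c = <gamma,p>, d = <gamma,q>.  On monomials
   Delta^m_e x^u = <e,u> x^(m+u), hence
   [Delta^m_e, Delta^m'_f] = Delta^(m+m')_(<e,m'> f - <f,m> e).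
   If r, s > 0 then b = -r a and c = -s d are nonzero; by symmetry let r <= s.
   For Y = [Delta^p_beta, Delta^q_gamma] = Delta^(p+q)_(b gamma - c beta), the
   brackets ad_Y^k Delta^p_beta are Delta^(p + k(p+q))_(v_k) with
   v_k = lambda_k (b gamma - c beta) + mu_k beta, where mu_0 = 1 and
   mu_(k+1) = <b gamma - c beta, p + k(p+q)> mu_k = a d (s(r+1) + k(s-r)) mu_k,
   which never vanishes in characteristic zero.  As beta and gamma are not
   proportional, no v_k is zero, and derivations Delta^m_v with pairwise distinct
   exponents and nonzero v are linearly independent (compare their values on the
   variables x_j), so the generated Lie algebra is infinite dimensional. *)

Lemma mnm_scaleE n k (m : 'X_{1..n}) : mnm_scale k m = (m *+ k)%MM.
Proof. by apply/mnmP => i; rewrite mnmE mulmnE mulnC. Qed.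

Lemma mulmn_inj n (m0 m : 'X_{1..n}) :
  m != 0%MM -> injective (fun k => (m0 + m *+ k)%MM).
Proof.
move=> m_neq0 k1 k2 /mnmP eq_m.
have [i mi_neq0] : exists i, m i != 0%N.
  apply/existsP; apply: contraR m_neq0 => /existsPn m0i.
  by apply/eqP/mnmP => i; rewrite mnm0E; apply/eqP/negPn.
move: (eq_m i); rewrite !mnmDE !mulmnE => /addnI /eqP.
by rewrite eqn_pmul2l ?lt0n // => /eqP.
Qed.

Section Delta.
Variables (K : fieldType) (n : nat).
Implicit Types (d e : 'I_n -> K) (m u : 'X_{1..n}) (f : {mpoly K[n]}).

Lemma pairingD d m1 m2 : pairing d (m1 + m2)%MM = pairing d m1 + pairing d m2.
Proof.
by rewrite /pairing -big_split; apply: eq_bigr => i _; rewrite mnmDE natrD mulrDr.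
Qed.

Lemma pairingMn d m k : pairing d (m *+ k)%MM = k%:R * pairing d m.
Proof.
rewrite /pairing mulr_sumr; apply: eq_bigr => i _.
by rewrite mulmnE natrM mulrA mulrC.
Qed.

Lemma pairing_mnm1 d j : pairing d U_(j)%MM = d j.
Proof.
rewrite /pairing (bigD1 j) //= mnm1E eqxx mulr1 big1 ?addr0 // => i /negbTE ij.
by rewrite mnm1E eq_sym ij mulr0.
Qed.

Lemma Delta_mpolyX m d u : Delta m d 'X_[u] = pairing d u *: 'X_[m + u].
Proof.
rewrite /Delta mpolyXD scalerAr /pairing scaler_suml; congr (_ * _).
apply: eq_bigr => j _; rewrite mderivX -scalerAr scalerA.
have [->|uj_gt0] := posnP (u j); first by rewrite !mulr0 !scale0r.
rewrite -mpolyXD addmC submK //; apply/mnm_lepP => i.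
by rewrite mnm1E; case: eqP => [<-|].
Qed.

Lemma Delta_is_linear m d : linear (Delta m d).
Proof.
move=> c f g; rewrite /Delta scalerAr -mulrDr scaler_sumr -big_split /=.
congr (_ * _); apply: eq_bigr => j _.
by rewrite mderivD mderivZ mulrDr scalerDr -scalerAr !scalerA mulrC.
Qed.

Lemma lie_bracket_is_linear (D E : {mpoly K[n]} -> {mpoly K[n]}) :
  linear D -> linear E -> linear (lie_bracket D E).
Proof.
move=> linD linE c f g; rewrite /lie_bracket linD linE linD linE.
by rewrite scalerBr opprD addrACA.
Qed.

Lemma linear_mpolyX_eq (F G : {mpoly K[n]} -> {mpoly K[n]}) :
  linear F -> linear G -> (forall u, F 'X_[u] = G 'X_[u]) -> F =1 G.
Proof.
move=> linF linG eqFG; elim/mpolyind => [|c u f _ _ IHf].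
  by rewrite -(subrr 0) !(zmod_morphism_linear linF, zmod_morphism_linear linG) !subrr.
by rewrite linF linG eqFG IHf.
Qed.

Definition bracket_vec m d m' e : 'I_n -> K :=
  fun j => pairing d m' * e j - pairing e m * d j.

Lemma pairing_bracket_vec m d m' e u :
  pairing (bracket_vec m d m' e) u
    = pairing d m' * pairing e u - pairing e m * pairing d u.
Proof.
rewrite /pairing !mulr_sumr -sumrB; apply: eq_bigr => i _.
by rewrite /bracket_vec mulrBl !mulrA.
Qed.

Lemma lie_bracket_Delta m d m' e :
  lie_bracket (Delta m d) (Delta m' e) =1 Delta (m + m') (bracket_vec m d m' e).
Proof.
apply: linear_mpolyX_eq => [||u].
- exact/lie_bracket_is_linear/Delta_is_linear/Delta_is_linear.
- exact: Delta_is_linear.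
rewrite /lie_bracket !(Delta_mpolyX, scalable_linear (Delta_is_linear _ _)) /=.
rewrite !scalerA !addmA [(m' + m)%MM]addmC -scalerBl pairing_bracket_vec !pairingD.
by congr (_ *: _); ring.
Qed.

Lemma Delta_lin_indep N (m : nat -> 'X_{1..n}) (v : nat -> 'I_n -> K) (c : 'I_N -> K) :
  injective m -> (forall t, exists j, v t j != 0) ->
  (forall f, \sum_(t < N) c t *: Delta (m t) (v t) f = 0) -> forall t, c t = 0.
Proof.
move=> m_inj v_neq0 c_rel t0; have [j vj_neq0] := v_neq0 t0.
have := congr1 (mcoeff (m t0 + U_(j))) (c_rel 'X_[U_(j)]).
rewrite raddf_sum (bigD1 t0) //= big1 => [|t t_neq_t0].
  rewrite mcoeff0 addr0 Delta_mpolyX pairing_mnm1 !mcoeffZ mcoeffX eqxx mulr1.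
  by move/eqP; rewrite mulf_eq0 (negbTE vj_neq0) orbF => /eqP.
rewrite Delta_mpolyX !mcoeffZ mcoeffX (inj_eq (@addIm _ _)) (inj_eq m_inj).
by rewrite (inj_eq val_inj) (negbTE t_neq_t0) !mulr0.
Qed.

Lemma kermx_tall_neq0 k (M : 'M[K]_(k.+1, k)) : kermx M != 0.
Proof. by rewrite kermx_eq0 /row_free neq_ltn ltnS rank_leq_col. Qed.

Lemma not_gen_lie_findim_Delta (D1 D2 : {mpoly K[n]} -> {mpoly K[n]})
    (W : nat -> lie_word) (m : nat -> 'X_{1..n}) (v : nat -> 'I_n -> K) :
  (forall t, eval_word D1 D2 (W t) =1 Delta (m t) (v t)) ->
  (forall t, exists j, v t j != 0) -> injective m -> ~ gen_lie_findim D1 D2.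
Proof.
move=> eval_W v_neq0 m_inj [k [B span_B]].
have [C eval_C] : exists C : 'M[K]_(k.+1, k),
    forall (t : 'I_k.+1) f, eval_word D1 D2 (W t) f = \sum_i C t i *: B i f.
  have [C hC] := fin_all_exists (fun t : 'I_k.+1 => span_B (W t)).
  by exists (\matrix_(t, i) C t i) => t f; rewrite hC; apply: eq_bigr => i _; rewrite mxE.
have /rowV0Pn [c /sub_kermxP cC /rV0Pn [t0]] := kermx_tall_neq0 C.
apply/negP/negPn/eqP.
apply: (Delta_lin_indep (c := c 0) m_inj v_neq0) => f.
transitivity (\sum_i (c *m C) 0 i *: B i f).
  under eq_bigr do rewrite -eval_W eval_C scaler_sumr.
  rewrite exchange_big; apply: eq_bigr => i _.
  by rewrite mxE scaler_suml; apply: eq_bigr => t _; rewrite scalerA.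
by rewrite cC big1 // => i _; rewrite mxE scale0r.
Qed.

Section IteratedBrackets.
Variables (D1 D2 : {mpoly K[n]} -> {mpoly K[n]}) (Y B : lie_word).
Variables (mY mB : 'X_{1..n}) (dY dB : 'I_n -> K).
Hypotheses (eval_Y : eval_word D1 D2 Y =1 Delta mY dY)
           (eval_B : eval_word D1 D2 B =1 Delta mB dB).

Fixpoint ad_iter k : lie_word := if k is k'.+1 then LBr Y (ad_iter k') else B.

Fixpoint ad_vec k : 'I_n -> K :=
  if k is k'.+1 then bracket_vec mY dY (mB + mY *+ k') (ad_vec k') else dB.

Lemma eval_ad_iter k : eval_word D1 D2 (ad_iter k) =1 Delta (mB + mY *+ k) (ad_vec k).
Proof.
elim: k => [|k IHk] f /=; first by rewrite addm0 eval_B.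
rewrite /lie_bracket !eval_Y !IHk -/(lie_bracket _ _ f) lie_bracket_Delta.
by rewrite mulmS !addmA [(mY + mB)%MM]addmC.
Qed.

Lemma ad_vec_decomp k : exists x,
  ad_vec k =1 fun j => x * dY j + (\prod_(i < k) pairing dY (mB + mY *+ i)) * dB j.
Proof.
elim: k => [|k [x IHx]]; first by exists 0 => j; rewrite big_ord0 mul0r add0r mul1r.
exists (pairing dY (mB + mY *+ k) * x - pairing (ad_vec k) mY) => j.
by rewrite /= /bracket_vec IHx big_ord_recr /=; ring.
Qed.

End IteratedBrackets.

End Delta.

Lemma nonproportional_lincomb_neq0 (K : fieldType) (n : nat) (beta gamma : 'I_n -> K) X Y :
  ~ proportional beta gamma -> (X != 0) || (Y != 0) ->
  exists j, X * beta j + Y * gamma j != 0.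
Proof.
move=> npr XY_neq0.
have [j|all0] := pickP (fun j => X * beta j + Y * gamma j != 0); first by exists j.
exfalso; apply: npr.
have {}all0 j : X * beta j = - (Y * gamma j).
  by apply/eqP; rewrite -addr_eq0; apply/negbFE/all0.
have [X0|X_neq0] := eqVneq X 0.
  have Y_neq0 : Y != 0 by rewrite X0 eqxx in XY_neq0.
  right; exists 0 => j; move: (all0 j); rewrite X0 mul0r => /eqP.
  by rewrite eq_sym oppr_eq0 mulf_eq0 (negbTE Y_neq0) => /eqP.
left; exists (- Y / X) => j; apply: (mulfI X_neq0); rewrite all0.
by field.
Qed.

Lemma proportionalC (K : fieldType) (n : nat) (beta gamma : 'I_n -> K) :
  proportional beta gamma -> proportional gamma beta.
Proof. by case; [right | left]. Qed.

Fixpoint swap_word (w : lie_word) : lie_word :=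
  match w with
  | LGen1 => LGen2
  | LGen2 => LGen1
  | LBr u v => LBr (swap_word u) (swap_word v)
  end.

Lemma eval_swap_word (K : fieldType) (n : nat) (D1 D2 : {mpoly K[n]} -> {mpoly K[n]}) w :
  eval_word D2 D1 w = eval_word D1 D2 (swap_word w).
Proof. by elim: w => //= u -> v ->. Qed.

Lemma gen_lie_findimC (K : fieldType) (n : nat) (D1 D2 : {mpoly K[n]} -> {mpoly K[n]}) :
  gen_lie_findim D1 D2 -> gen_lie_findim D2 D1.
Proof. by move=> [k [B span_B]]; exists k, B => w; rewrite eval_swap_word. Qed.

Lemma not_gen_lie_findim_Delta_le (K : fieldType) (n : nat) (hK : [pchar K] =i pred0)
    (p q : 'X_{1..n}) (beta gamma : 'I_n -> K) (r s : nat) :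
    (p + q != 0)%MM -> ~ proportional beta gamma -> (r <= s)%N ->
    pairing beta q != 0 -> pairing gamma p != 0 ->
    pairing beta (p *+ r + q)%MM = 0 -> pairing gamma (p + q *+ s)%MM = 0 ->
  ~ gen_lie_findim (Delta p beta) (Delta q gamma).
Proof.
move=> pq_neq0 npr le_rs b_neq0 c_neq0 hr hs.
set a := pairing beta p; set b := pairing beta q in b_neq0 *.
set c := pairing gamma p in c_neq0 *; set d := pairing gamma q.
have def_b : b = - (r%:R * a).
  by apply/eqP; rewrite -addr_eq0 addrC -pairingMn -pairingD hr.
have def_c : c = - (s%:R * d).
  by apply/eqP; rewrite -addr_eq0 -pairingMn -pairingD hs.
have a_neq0 : a != 0 by apply: contraNneq b_neq0 => a0; rewrite def_b a0 mulr0 oppr0.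
have d_neq0 : d != 0 by apply: contraNneq c_neq0 => d0; rewrite def_c d0 mulr0 oppr0.
have s_gt0 : (0 < s)%N.
  by rewrite lt0n; apply: contraNneq c_neq0 => s0; rewrite def_c s0 mul0r oppr0.
pose dY := bracket_vec p beta q gamma.
have pairing_dY k : pairing dY (p + (p + q) *+ k)%MM = a * d * (s * r.+1 + k * (s - r))%:R.
  rewrite pairing_bracket_vec !pairingD !pairingMn !pairingD -/a -/b -/c -/d.
  rewrite natrD !natrM natrB // -addn1 natrD def_b def_c; ring.
have pairing_dY_neq0 k : pairing dY (p + (p + q) *+ k)%MM != 0.
  by rewrite pairing_dY !mulf_neq0 // ((pcharf0P K).1 hK) -lt0n ltn_addr ?muln_gt0 ?s_gt0.
have eval_Y : eval_word (Delta p beta) (Delta q gamma) (LBr LGen1 LGen2) =1 Delta (p + q) dY.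
  exact: lie_bracket_Delta.
apply: (not_gen_lie_findim_Delta (eval_ad_iter eval_Y (B := LGen1) (fun f => erefl)) _
          (mulmn_inj (m0 := p) pq_neq0)) => k.
have [x def_v] := ad_vec_decomp (p + q) p dY beta k.
set y := \prod_(i < k) _ in def_v.
have y_neq0 : y != 0 by apply/prodf_neq0 => i _; exact: pairing_dY_neq0.
have [|j vj_neq0] := nonproportional_lincomb_neq0 (X := y - x * c) (Y := x * b) npr.
  by have [->|x_neq0] := eqVneq x 0; rewrite ?mul0r ?subr0 ?y_neq0 // mulf_neq0 ?orbT.
by exists j; rewrite def_v /dY /bracket_vec -/b -/c; move: vj_neq0; congr (_ != _); ring.
Qed.

Theorem lemma6 (K : fieldType) (n : nat) (hK : [pchar K] =i pred0)
    (p q : 'X_{1..n}) (hp : p != 0%MM) (hq : q != 0%MM)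
    (beta gamma : 'I_n -> K) (hnp : ~ proportional beta gamma)
    (hfin : gen_lie_findim (Delta p beta) (Delta q gamma))
    (r s : nat)
    (hr : pairing beta (mnm_scale r p + q)%MM = 0)
    (hrmin : forall r' : nat, pairing beta (mnm_scale r' p + q)%MM = 0 -> (r <= r')%N)
    (hs : pairing gamma (p + mnm_scale s q)%MM = 0)
    (hsmin : forall s' : nat, pairing gamma (p + mnm_scale s' q)%MM = 0 -> (s <= s')%N) :
  r = 0%N \/ s = 0%N.
Proof.
have [->|r_gt0] := posnP r; first by left.
have [->|s_gt0] := posnP s; first by right.
exfalso.
have b_neq0 : pairing beta q != 0.
  apply: contraTneq r_gt0 => b0; rewrite -leqNgt hrmin //.
  by rewrite mnm_scaleE pairingD pairingMn mul0r add0r.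
have c_neq0 : pairing gamma p != 0.
  apply: contraTneq s_gt0 => c0; rewrite -leqNgt hsmin //.
  by rewrite mnm_scaleE pairingD pairingMn mul0r addr0.
have pq_neq0 : (p + q != 0)%MM by rewrite mnmD_eq0 negb_and hp.
rewrite mnm_scaleE in hr; rewrite mnm_scaleE in hs.
have [le_rs|/ltnW le_sr] := leqP r s.
  exact: (not_gen_lie_findim_Delta_le hK pq_neq0 hnp le_rs b_neq0 c_neq0 hr hs hfin).
apply: (not_gen_lie_findim_Delta_le hK _ (fun h => hnp (proportionalC h)) le_sr c_neq0 b_neq0
          _ _ (gen_lie_findimC hfin)); by rewrite addmC.
Qed.
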